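(* Let $m,n_1,n_2\in\mathbb N$ and $M\in{\rm Mat}_m(\mathbb Z)$. Then $\Gamma_{M,\,n_1}$ embeds in $\Gamma_{M,\,n_1n_2}$ as an induced subgraph; that is, there is an injective map $f:V(\Gamma_{M,\,n_1})\to V(\Gamma_{M,\,n_1n_2})$ such that for all ${\bf x},{\bf y}$, $({\bf x},{\bf y})$ is an arc of $\Gamma_{M,\,n_1}$ if and only if $(f({\bf x}),f({\bf y}))$ is an arc of $\Gamma_{M,\,n_1n_2}$.
   Context: $\mathbb N$ is the set of positive integers and $\mathbb Z_n$ the integers modulo $n$. For $M\in{\rm Mat}_m(\mathbb Z)$, the move graph $\Gamma_{M,\,n}$ is the directed graph with vertex set $\mathbb Z_n^m$ and arc set $\{({\bf x},{\bf y}) : {\bf y}^T=M{\bf x}^T \text{ in } \mathbb Z_n^m\}$ (loops allowed). *)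

From HB Require Import structures.
From mathcomp Require Import all_boot all_order all_algebra.
Set Implicit Arguments. Unset Strict Implicit. Unset Printing Implicit Defensive.
Import Order.TTheory GRing.Theory Num.Theory.
Local Open Scope ring_scope.

(* Z_n^m is modelled as {ffun 'I_m -> 'I_n}: residues 0..n-1 (works for all
   n >= 1, unlike 'Z_n which is degenerate for n = 1). *)
Definition vtx (m n : nat) := {ffun 'I_m -> 'I_n}.

Definition move_arc (m n : nat) (M : 'M[int]_m) (x y : vtx m n) : Prop :=
  forall i : 'I_m,
    ((y i : nat)%:Z = (\sum_(j < m) M i j * ((x j : nat)%:Z)) %% (n%:Z))%Z.

From HB Require Import structures.
From mathcomp Require Import all_boot all_order all_algebra.
Import GRing.Theory Num.Theory.
Local Open Scope ring_scope.

(* Multiplication by n2 maps residues mod n1 injectively onto the multiples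
   of n2 mod n1 n2.  It commutes with the integer linear map M, and
   n2 a = n2 b (mod n1 n2) holds iff a = b (mod n1), so arcs are both
   preserved and reflected. *)

Lemma eqz_pmul2l_mod (p a b d : int) :
  0 < p -> (p * a = (p * b) %% (p * d))%Z <-> (a = b %% d)%Z.
Proof.
move=> p_gt0; rewrite -mulz_modr //; split=> [|->] //.
by apply: mulfI; rewrite lt0r_neq0.
Qed.

Section ScaleEmbedding.

Variables n1 n2 : nat.
Hypothesis n2_gt0 : (0 < n2)%N.

Lemma scale_ord_subproof (i : 'I_n1) : (n2 * i < n1 * n2)%N.
Proof. by rewrite mulnC ltn_pmul2r. Qed.

Definition scale_ord (i : 'I_n1) : 'I_(n1 * n2) := Ordinal (scale_ord_subproof i).

Lemma scale_ord_inj : injective scale_ord.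
Proof.
move=> i j /(congr1 val) /= /eqP; rewrite eqn_pmul2l // => /eqP.
exact: val_inj.
Qed.

Definition scale_vtx {m : nat} (x : vtx m n1) : vtx m (n1 * n2) :=
  [ffun j => scale_ord (x j)].

Lemma scale_vtx_inj (m : nat) : injective (@scale_vtx m).
Proof.
move=> x y /ffunP eq_xy; apply/ffunP => j.
by apply: scale_ord_inj; have := eq_xy j; rewrite !ffunE.
Qed.

Lemma row_sum_scale (m : nat) (M : 'M[int]_m) (x : vtx m n1) (i : 'I_m) :
  \sum_(j < m) M i j * (scale_vtx x j : nat)%:Z
  = n2%:Z * \sum_(j < m) M i j * (x j : nat)%:Z.
Proof.
rewrite mulr_sumr; apply: eq_bigr => j _.
by rewrite ffunE /= PoszM mulrCA.
Qed.

Lemma move_arc_scale (m : nat) (M : 'M[int]_m) (x y : vtx m n1) :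
  move_arc M x y <-> move_arc M (scale_vtx x) (scale_vtx y).
Proof.
have n2_gt0z : 0 < n2%:Z by rewrite ltz_nat.
have row_iff i : ((scale_vtx y i : nat)%:Z
      = (\sum_(j < m) M i j * (scale_vtx x j : nat)%:Z) %% (n1 * n2)%N%:Z)%Z
    <-> ((y i : nat)%:Z = (\sum_(j < m) M i j * (x j : nat)%:Z) %% n1%:Z)%Z.
  rewrite row_sum_scale ffunE /= [(n1 * n2)%N]mulnC !PoszM.
  exact: eqz_pmul2l_mod.
by split=> arc i; apply/row_iff.
Qed.

End ScaleEmbedding.

Theorem theorem3p3 (m n1 n2 : nat) (M : 'M[int]_m) :
  (0 < m)%N -> (0 < n1)%N -> (0 < n2)%N ->
  exists f : vtx m n1 -> vtx m (n1 * n2),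
    injective f /\
    (forall x y : vtx m n1, move_arc M x y <-> move_arc M (f x) (f y)).
Proof.
move=> _ _ n2_gt0; exists (@scale_vtx n1 n2 n2_gt0 m); split.
- exact: scale_vtx_inj.
- exact: move_arc_scale.
Qed.
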